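(* Let $Q$ be a non-degenerate non-convex (and not self-intersecting) quadrangle of perimeter $2$. Then its dual quadrangle $Q^\circ$ is also non-convex (and not self-intersecting).
   Context: Identify $\mathbb{R}^2$ with $\mathbb{C}$. A quadrangle $Q=ABCD$ is an ordered 4-tuple of points $A,B,C,D\in\mathbb{C}$: $A$ is the first vertex and the order $A\to B\to C\to D\to A$ is the direction of traversal. Its edge vectors are $z_1=B-A$, $z_2=C-B$, $z_3=D-C$, $z_4=A-D$, so $z_1+z_2+z_3+z_4=0$; its perimeter is $|z_1|+|z_2|+|z_3|+|z_4|$. $Q$ is non-degenerate if each pair of consecutive edge vectors $(z_1,z_2),(z_2,z_3),(z_3,z_4),(z_4,z_1)$ consists of nonzero, non-collinear vectors. A non-degenerate quadrangle is self-intersecting if one of the pairs of opposite edges (segments $AB$ and $CD$, or $BC$ and $DA$) intersect; it is convex if it is not self-intersecting and all its interior angles are less than $\pi$; it is non-convex if it is neither self-intersecting nor convex. Associated plane: for a non-degenerate $Q$ of perimeter $2$, choose $u_1,\dots,u_4\in\mathbb{C}$ with $u_k^2=z_k$, where $u_1$ is an arbitrary square root of $z_1$ and for $k=1,2,3$ the sign of $u_{k+1}$ is chosen so that $\operatorname{Im}(\overline{u_k}u_{k+1})$ has the same sign as $\operatorname{Im}(\overline{z_k}z_{k+1})$. Write $u_k=a_k+i b_k$ and $\bar a=(a_1,a_2,a_3,a_4)$, $\bar b=(b_1,b_2,b_3,b_4)$; these are orthonormal in $\mathbb{R}^4$. Let $\Pi=\operatorname{span}(\bar a,\bar b)$ and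 $\Pi^\perp$ its orthogonal complement. Dual quadrangle: choose an orthonormal basis $(\bar c,\bar d)$ of $\Pi^\perp$, put $w_k=(c_k+i d_k)^2$; then $\sum_k w_k=0$ and $\sum_k|w_k|=2$. The dual quadrangle $Q^\circ=KLMN$ is the quadrangle with $L-K=w_1$, $M-L=w_2$, $N-M=w_3$, $K-N=w_4$. It is determined up to rotation, reflection and translation. *)

(* plane = R*R identified with C. *)
From Stdlib Require Import Reals.
Open Scope R_scope.

Definition pt := (R * R)%type.

Definition padd (p q : pt) : pt := (fst p + fst q, snd p + snd q).
Definition psub (p q : pt) : pt := (fst p - fst q, snd p - snd q).
Definition pscale (s : R) (p : pt) : pt := (s * fst p, s * snd p).

Definition cross (z w : pt) : R := fst z * snd w - snd z * fst w.
Definition cnorm (z : pt) : R := sqrt (fst z * fst z + snd z * snd z).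
Definition csq (u : pt) : pt :=
  (fst u * fst u - snd u * snd u, 2 * fst u * snd u).

Definition noncollinear (z w : pt) : Prop :=
  z <> (0, 0) /\ w <> (0, 0) /\ cross z w <> 0.

Definition perimeter (A B C D : pt) : R :=
  cnorm (psub B A) + cnorm (psub C B) + cnorm (psub D C) + cnorm (psub A D).

Definition nondegenerate (A B C D : pt) : Prop :=
  noncollinear (psub B A) (psub C B) /\
  noncollinear (psub C B) (psub D C) /\
  noncollinear (psub D C) (psub A D) /\
  noncollinear (psub A D) (psub B A).

Definition segments_meet (P Q R' S : pt) : Prop :=
  exists s t, 0 <= s <= 1 /\ 0 <= t <= 1 /\
    padd P (pscale s (psub Q P)) = padd R' (pscale t (psub S R')).

Definition self_intersecting (A B C D : pt) : Prop :=
  nondegenerate A B C D /\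
  (segments_meet A B C D \/ segments_meet B C D A).

(* twice the signed (shoelace) area; its sign is the orientation of the
   traversal A -> B -> C -> D -> A *)
Definition signed_area2 (A B C D : pt) : R :=
  cross A B + cross B C + cross C D + cross D A.

(* For a simple (non-self-intersecting) quadrangle, the interior angle at a
   vertex is < pi iff the turn there (cross of incoming and outgoing edge
   vectors) has the same sign as the orientation of the quadrangle. *)
Definition interior_angles_lt_pi (A B C D : pt) : Prop :=
  let o := signed_area2 A B C D in
  0 < cross (psub A D) (psub B A) * o /\
  0 < cross (psub B A) (psub C B) * o /\
  0 < cross (psub C B) (psub D C) * o /\
  0 < cross (psub D C) (psub A D) * o.

Definition convex (A B C D : pt) : Prop :=
  nondegenerate A B C D /\ ~ self_intersecting A B C D /\
  interior_angles_lt_pi A B C D.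

Definition nonconvex (A B C D : pt) : Prop :=
  nondegenerate A B C D /\ ~ self_intersecting A B C D /\
  ~ convex A B C D.

Definition same_sign (x y : R) : Prop := 0 < x * y.

(* u1..u4 are square roots of the edge vectors of ABCD chosen with the sign
   rule of the associated plane. *)
Definition admissible_roots (A B C D u1 u2 u3 u4 : pt) : Prop :=
  csq u1 = psub B A /\ csq u2 = psub C B /\
  csq u3 = psub D C /\ csq u4 = psub A D /\
  same_sign (cross u1 u2) (cross (psub B A) (psub C B)) /\
  same_sign (cross u2 u3) (cross (psub C B) (psub D C)) /\
  same_sign (cross u3 u4) (cross (psub D C) (psub A D)).

Definition dot4 (x1 x2 x3 x4 y1 y2 y3 y4 : R) : R :=
  x1 * y1 + x2 * y2 + x3 * y3 + x4 * y4.

(* (c,d) is an orthonormal basis of the orthogonal complement of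
   span(a,b) in R^4, where a = (Re u_k)_k, b = (Im u_k)_k.  (Since a, b are
   orthonormal, any orthonormal pair orthogonal to both is a basis of the
   2-dimensional complement.) *)
Definition dual_basis (u1 u2 u3 u4 : pt) (c1 c2 c3 c4 d1 d2 d3 d4 : R) : Prop :=
  let a1 := fst u1 in let a2 := fst u2 in let a3 := fst u3 in let a4 := fst u4 in
  let b1 := snd u1 in let b2 := snd u2 in let b3 := snd u3 in let b4 := snd u4 in
  dot4 c1 c2 c3 c4 c1 c2 c3 c4 = 1 /\
  dot4 d1 d2 d3 d4 d1 d2 d3 d4 = 1 /\
  dot4 c1 c2 c3 c4 d1 d2 d3 d4 = 0 /\
  dot4 c1 c2 c3 c4 a1 a2 a3 a4 = 0 /\
  dot4 c1 c2 c3 c4 b1 b2 b3 b4 = 0 /\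
  dot4 d1 d2 d3 d4 a1 a2 a3 a4 = 0 /\
  dot4 d1 d2 d3 d4 b1 b2 b3 b4 = 0.

Definition is_dual (u1 u2 u3 u4 K L M N : pt) : Prop :=
  exists c1 c2 c3 c4 d1 d2 d3 d4 : R,
    dual_basis u1 u2 u3 u4 c1 c2 c3 c4 d1 d2 d3 d4 /\
    psub L K = csq (c1, d1) /\
    psub M L = csq (c2, d2) /\
    psub N M = csq (c3, d3) /\
    psub K N = csq (c4, d4).

From Stdlib Require Import Reals Lra Lia Psatz.
Open Scope R_scope.

(* A simple non-degenerate quadrangle is non-convex exactly when the product of
   its four turns [cross z_k z_(k+1)] is negative.  For edges [z_k = u_k^2] one has
   [cross (u^2) (w^2) = 2 <u,w> cross u w], and by the planar Cauchy-Binet identity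
   [cross u1 u2 * cross u3 u4 = <u1,u3><u2,u4> - <u1,u4><u2,u3>], so this product is
   a homogeneous polynomial of degree 8 in the dot products [<u_i,u_j>], i <> j.
   The 4x4 matrix with rows [(u_k, c_k, d_k)] has orthonormal columns (perimeter 2
   and the closing of the polygon make the real and imaginary parts a, b of u
   orthonormal), hence orthonormal rows:
   [<v_i,v_j> = - <u_i,u_j>] for i <> j, where [v_k = (c_k, d_k)].  So Q and its
   dual have the same product of turns. *)

Definition pdot (z w : pt) : R := fst z * fst w + snd z * snd w.

Lemma cross_csq (u w : pt) : cross (csq u) (csq w) = 2 * pdot u w * cross u w.
Proof. unfold cross, csq, pdot; simpl; ring. Qed.

Lemma cross_mul_cross (a b c d : pt) :
  cross a b * cross c d = pdot a c * pdot b d - pdot a d * pdot b c.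
Proof. unfold cross, pdot; ring. Qed.

Lemma cnorm_csq (u : pt) : cnorm (csq u) = pdot u u.
Proof.
  unfold cnorm, csq, pdot; simpl.
  replace ((fst u * fst u - snd u * snd u) * (fst u * fst u - snd u * snd u)
           + 2 * fst u * snd u * (2 * fst u * snd u))
    with ((fst u * fst u + snd u * snd u) * (fst u * fst u + snd u * snd u)) by ring.
  apply sqrt_square; nra.
Qed.

Definition sum4 (f : nat -> R) : R := f 0%nat + f 1%nat + f 2%nat + f 3%nat.
Definition kron (i j : nat) : R := if Nat.eqb i j then 1 else 0.
Definition transpose (m : nat -> nat -> R) (i j : nat) : R := m j i.
Definition row_gram (m : nat -> nat -> R) (i j : nat) : R := sum4 (fun k => m i k * m j k).
Definition orthonormal_rows (m : nat -> nat -> R) : Prop :=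
  forall i j, (i < 4)%nat -> (j < 4)%nat -> row_gram m i j = kron i j.
Definition gram_defect (m : nat -> nat -> R) : R :=
  sum4 (fun i => sum4 (fun j => Rsqr (row_gram m i j - kron i j))).

Lemma sum4_ext (f g : nat -> R) :
  (forall k, (k < 4)%nat -> f k = g k) -> sum4 f = sum4 g.
Proof. intros h; unfold sum4; rewrite !h by lia; reflexivity. Qed.

Lemma sum4_nonneg_eq0 (f : nat -> R) :
  (forall k, (k < 4)%nat -> 0 <= f k) -> sum4 f = 0 ->
  forall k, (k < 4)%nat -> f k = 0.
Proof.
  unfold sum4; intros h0 hs k hk.
  pose proof (h0 0%nat ltac:(lia)); pose proof (h0 1%nat ltac:(lia));
  pose proof (h0 2%nat ltac:(lia)); pose proof (h0 3%nat ltac:(lia)).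
  destruct k as [|[|[|[|k]]]]; lra || lia.
Qed.

Lemma sum4_nonneg (f : nat -> R) :
  (forall k, (k < 4)%nat -> 0 <= f k) -> 0 <= sum4 f.
Proof.
  unfold sum4; intros h.
  pose proof (h 0%nat ltac:(lia)); pose proof (h 1%nat ltac:(lia));
  pose proof (h 2%nat ltac:(lia)); pose proof (h 3%nat ltac:(lia)); lra.
Qed.

(* Both sides equal [tr((M M^T)^2) - 2 tr(M M^T) + 4], and [tr((M M^T)^2) = tr((M^T M)^2)]. *)
Lemma gram_defect_transpose (m : nat -> nat -> R) :
  gram_defect (transpose m) = gram_defect m.
Proof. unfold gram_defect, row_gram, transpose, sum4, kron, Rsqr; simpl; ring. Qed.

Lemma orthonormal_rows_iff_defect (m : nat -> nat -> R) :
  orthonormal_rows m <-> gram_defect m = 0.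
Proof.
  split.
  - intros h. unfold gram_defect.
    rewrite (sum4_ext _ (fun _ => 0)); [unfold sum4; ring|].
    intros i hi. rewrite (sum4_ext _ (fun _ => 0)); [unfold sum4; ring|].
    intros j hj. rewrite h by assumption. unfold Rsqr; ring.
  - intros h i j hi hj.
    assert (hsq : forall i j, 0 <= Rsqr (row_gram m i j - kron i j))
      by (intros; apply Rle_0_sqr).
    assert (hrow : sum4 (fun j => Rsqr (row_gram m i j - kron i j)) = 0).
    { apply (sum4_nonneg_eq0 (fun i => sum4 (fun j => Rsqr (row_gram m i j - kron i j))));
        [intros k _; apply sum4_nonneg; auto | exact h | exact hi]. }
    pose proof (sum4_nonneg_eq0 _ (fun k _ => hsq i k) hrow j hj) as hij.
    apply Rsqr_0_uniq in hij; lra.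
Qed.

Lemma orthonormal_rows_of_cols (m : nat -> nat -> R) :
  orthonormal_rows (transpose m) -> orthonormal_rows m.
Proof.
  rewrite !orthonormal_rows_iff_defect, gram_defect_transpose; auto.
Qed.

Definition quad {A : Type} (a0 a1 a2 a3 : A) (k : nat) : A :=
  match k with 0 => a0 | 1 => a1 | 2 => a2 | _ => a3 end%nat.

Definition frame (u v : nat -> pt) (k a : nat) : R :=
  match a with
  | 0 => fst (u k) | 1 => snd (u k) | 2 => fst (v k) | _ => snd (v k)
  end%nat.

Lemma row_gram_frame (u v : nat -> pt) (i j : nat) :
  row_gram (frame u v) i j = pdot (u i) (u j) + pdot (v i) (v j).
Proof. unfold row_gram, sum4, frame, pdot; simpl; ring. Qed.

Lemma frame_pdot_opp (u v : nat -> pt) :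
  orthonormal_rows (transpose (frame u v)) ->
  forall i j, (i < 4)%nat -> (j < 4)%nat -> i <> j ->
  pdot (v i) (v j) = - pdot (u i) (u j).
Proof.
  intros h i j hi hj hij.
  pose proof (orthonormal_rows_of_cols _ h i j hi hj) as hg.
  rewrite row_gram_frame in hg; unfold kron in hg.
  rewrite (proj2 (Nat.eqb_neq i j) hij) in hg; lra.
Qed.

Definition cyclic_cross (z1 z2 z3 z4 : pt) : R :=
  cross z1 z2 * cross z2 z3 * cross z3 z4 * cross z4 z1.

Lemma cyclic_cross_csq (z1 z2 z3 z4 : pt) :
  cyclic_cross (csq z1) (csq z2) (csq z3) (csq z4) =
  16 * (pdot z1 z2 * pdot z2 z3 * pdot z3 z4 * pdot z1 z4)
     * (pdot z1 z3 * pdot z2 z4 - pdot z1 z4 * pdot z2 z3)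
     * (pdot z1 z3 * pdot z2 z4 - pdot z1 z2 * pdot z3 z4).
Proof.
  transitivity (16 * (pdot z1 z2 * pdot z2 z3 * pdot z3 z4 * pdot z4 z1)
                * (cross z1 z2 * cross z3 z4) * (cross z2 z3 * cross z4 z1)).
  - unfold cyclic_cross; rewrite !cross_csq; ring.
  - rewrite !cross_mul_cross; unfold pdot; ring.
Qed.

Lemma cyclic_cross_csq_opp_gram (u v : nat -> pt) :
  (forall i j, (i < 4)%nat -> (j < 4)%nat -> i <> j ->
     pdot (v i) (v j) = - pdot (u i) (u j)) ->
  cyclic_cross (csq (v 0%nat)) (csq (v 1%nat)) (csq (v 2%nat)) (csq (v 3%nat)) =
  cyclic_cross (csq (u 0%nat)) (csq (u 1%nat)) (csq (u 2%nat)) (csq (u 3%nat)).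
Proof. intros h; rewrite !cyclic_cross_csq, !h by lia; ring. Qed.

Definition turn (X Y Z : pt) : R := cross (psub Y X) (psub Z Y).

Lemma turn_cycle (X Y Z : pt) : turn X Y Z = turn Y Z X.
Proof. unfold turn, cross, psub; simpl; ring. Qed.

Lemma ratio_in_unit (a b : R) : a * b < 0 -> 0 <= a / (a - b) <= 1.
Proof.
  intros hab.
  assert (hq : a / (a - b) * (a - b) = a) by (field; nra).
  set (q := a / (a - b)) in *.
  destruct (Rlt_or_le 0 a); [assert (b < 0) by nra | assert (0 < b) by nra];
    split; nra.
Qed.

Lemma segments_meet_of_strict (P Q R' S : pt) :
  turn P Q R' * turn P Q S < 0 -> turn R' S P * turn R' S Q < 0 ->
  segments_meet P Q R' S.
Proof.
  intros hPQ hRS.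
  exists (turn R' S P / (turn R' S P - turn R' S Q)),
         (turn P Q R' / (turn P Q R' - turn P Q S)).
  split; [apply ratio_in_unit; exact hRS|].
  split; [apply ratio_in_unit; exact hPQ|].
  assert (hden1 : turn R' S P - turn R' S Q <> 0) by nra.
  assert (hden2 : turn P Q R' - turn P Q S <> 0) by nra.
  revert hden1 hden2.
  destruct P as [p1 p2], Q as [q1 q2], R' as [r1 r2], S as [s1 s2].
  unfold turn, cross, padd, pscale, psub; simpl; intros.
  f_equal; field; split; assumption.
Qed.

Lemma turns_of_segments_meet (P Q R' S : pt) :
  segments_meet P Q R' S ->
  turn P Q R' * turn P Q S <= 0 /\ turn R' S P * turn R' S Q <= 0.
Proof.
  intros [s [t [hs [ht hX]]]].
  set (rho := cross (psub Q P) (psub S R')).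
  assert (h1 : turn P Q R' = - t * rho /\ turn P Q S = (1 - t) * rho /\
               turn R' S P = s * rho /\ turn R' S Q = - (1 - s) * rho).
  { revert hX; unfold rho.
    destruct P as [p1 p2], Q as [q1 q2], R' as [r1 r2], S as [s1 s2].
    unfold turn, cross, padd, pscale, psub; simpl; intros hX.
    injection hX as ex ey.
    assert (hPQ : (q1 - p1) * (r2 + t * (s2 - r2) - (p2 + s * (q2 - p2)))
                  - (q2 - p2) * (r1 + t * (s1 - r1) - (p1 + s * (q1 - p1))) = 0)
      by (rewrite ex, ey; ring).
    assert (hRS : (s1 - r1) * (r2 + t * (s2 - r2) - (p2 + s * (q2 - p2)))
                  - (s2 - r2) * (r1 + t * (s1 - r1) - (p1 + s * (q1 - p1))) = 0)
      by (rewrite ex, ey; ring).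
    repeat split; lra. }
  destruct h1 as [-> [-> [-> ->]]].
  split; [assert (0 <= t * (1 - t)) | assert (0 <= s * (1 - s))]; nra.
Qed.

Definition turn_product (A B C D : pt) : R :=
  turn D A B * turn A B C * turn B C D * turn C D A.

Lemma turn_product_edges (A B C D : pt) :
  turn_product A B C D = cyclic_cross (psub B A) (psub C B) (psub D C) (psub A D).
Proof. unfold turn_product, turn, cyclic_cross; ring. Qed.

Lemma noncollinear_iff_cross (z w : pt) : noncollinear z w <-> cross z w <> 0.
Proof.
  split; [intros [_ [_ h]]; exact h|].
  intros h; repeat split; try exact h; intros ->; apply h; unfold cross; simpl; ring.
Qed.

Lemma nondegenerate_iff_turns (A B C D : pt) :
  nondegenerate A B C D <->
  turn D A B <> 0 /\ turn A B C <> 0 /\ turn B C D <> 0 /\ turn C D A <> 0.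
Proof.
  unfold nondegenerate, turn; rewrite !noncollinear_iff_cross; tauto.
Qed.

Lemma signed_area2_turns (A B C D : pt) :
  signed_area2 A B C D = turn D A B + turn B C D.
Proof.
  destruct A, B, C, D; unfold signed_area2, turn, cross, psub; simpl; ring.
Qed.

Lemma mul_pos_cases (x y : R) :
  0 < x * y -> (0 < x /\ 0 < y) \/ (x < 0 /\ y < 0).
Proof.
  intros h.
  destruct (Rtotal_order x 0) as [hx | [-> | hx]]; [right | lra | left];
    split; nra.
Qed.

Lemma sign_cases4 (a b c d : R) :
  0 < a * b * c * d ->
  (0 < a * b /\ 0 < b * c /\ 0 < c * d) \/
  (a * b < 0 /\ c * d < 0) \/ (b * c < 0 /\ d * a < 0).
Proof.
  intros h.
  assert (hab : 0 < (a * b) * (c * d)) by lra.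
  assert (hbc : 0 < (b * c) * (d * a)) by lra.
  destruct (mul_pos_cases _ _ hab) as [[hab' hcd'] | hneg]; [| right; left; exact hneg].
  destruct (mul_pos_cases _ _ hbc) as [[hbc' _] | hneg]; [| right; right; exact hneg].
  left; auto.
Qed.

Lemma same_sign_mul_sum (a b c d : R) :
  0 < a * b -> 0 < b * c -> 0 < c * d ->
  0 < a * (a + c) /\ 0 < b * (a + c) /\ 0 < c * (a + c) /\ 0 < d * (a + c).
Proof.
  intros hab hbc hcd.
  assert (hac : 0 < a * c) by nra.
  repeat split; nra.
Qed.

Lemma turn_product_neg_of_nonconvex (A B C D : pt) :
  nonconvex A B C D -> turn_product A B C D < 0.
Proof.
  intros [hnd [hsi hcv]].
  pose proof hnd as hturns; apply nondegenerate_iff_turns in hturns.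
  destruct hturns as [hA [hB [hC hD]]].
  unfold turn_product.
  destruct (Rlt_or_le (turn D A B * turn A B C * turn B C D * turn C D A) 0)
    as [hneg | hpos]; [exact hneg | exfalso].
  assert (hprod : 0 < turn D A B * turn A B C * turn B C D * turn C D A).
  { assert (turn D A B * turn A B C * turn B C D * turn C D A <> 0)
      by (repeat apply Rmult_integral_contrapositive_currified; assumption).
    lra. }
  destruct (sign_cases4 _ _ _ _ hprod) as [[h1 [h2 h3]] | [[h1 h2] | [h1 h2]]].
  - apply hcv; split; [exact hnd|]; split; [exact hsi|].
    unfold interior_angles_lt_pi; rewrite signed_area2_turns.
    fold (turn D A B) (turn A B C) (turn B C D) (turn C D A).
    pose proof (same_sign_mul_sum _ _ _ _ h1 h2 h3); tauto.
  - apply hsi; split; [exact hnd|]; left.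
    apply segments_meet_of_strict.
    + rewrite <- (turn_cycle D A B); nra.
    + rewrite <- (turn_cycle B C D); nra.
  - apply hsi; split; [exact hnd|]; right.
    apply segments_meet_of_strict.
    + rewrite <- (turn_cycle A B C); nra.
    + rewrite <- (turn_cycle C D A); nra.
Qed.

Lemma nonconvex_of_turn_product_neg (A B C D : pt) :
  turn_product A B C D < 0 -> nonconvex A B C D.
Proof.
  unfold turn_product; intros hneg.
  assert (hnd : nondegenerate A B C D).
  { apply nondegenerate_iff_turns; repeat split; intros h; rewrite h in hneg; lra. }
  split; [exact hnd|]; split.
  - intros [_ [hm | hm]]; apply turns_of_segments_meet in hm; destruct hm as [h1 h2].
    + rewrite <- (turn_cycle D A B) in h1; rewrite <- (turn_cycle B C D) in h2; nra.
    + rewrite <- (turn_cycle A B C) in h1; rewrite <- (turn_cycle C D A) in h2; nra.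
  - intros [_ [_ hangles]].
    unfold interior_angles_lt_pi in hangles; rewrite signed_area2_turns in hangles.
    fold (turn D A B) (turn A B C) (turn B C D) (turn C D A) in hangles.
    set (o := turn D A B + turn B C D) in hangles.
    destruct hangles as [h1 [h2 [h3 h4]]].
    pose proof (Rmult_lt_0_compat _ _
      (Rmult_lt_0_compat _ _ (Rmult_lt_0_compat _ _ h1 h2) h3) h4) as hpos.
    assert (ho4 : 0 <= (o * o) * (o * o)) by (apply Rmult_le_pos; nra).
    nra.
Qed.

Lemma nonconvex_iff_turn_product_neg (A B C D : pt) :
  nonconvex A B C D <-> turn_product A B C D < 0.
Proof.
  split; [apply turn_product_neg_of_nonconvex | apply nonconvex_of_turn_product_neg].
Qed.

Lemma edges_sum_zero (A B C D : pt) :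
  padd (padd (padd (psub B A) (psub C B)) (psub D C)) (psub A D) = (0, 0).
Proof. unfold padd, psub; simpl; f_equal; ring. Qed.

Lemma re_im_orthonormal (u1 u2 u3 u4 : pt) :
  padd (padd (padd (csq u1) (csq u2)) (csq u3)) (csq u4) = (0, 0) ->
  pdot u1 u1 + pdot u2 u2 + pdot u3 u3 + pdot u4 u4 = 2 ->
  let a1 := fst u1 in let a2 := fst u2 in let a3 := fst u3 in let a4 := fst u4 in
  let b1 := snd u1 in let b2 := snd u2 in let b3 := snd u3 in let b4 := snd u4 in
  dot4 a1 a2 a3 a4 a1 a2 a3 a4 = 1 /\ dot4 b1 b2 b3 b4 b1 b2 b3 b4 = 1 /\
  dot4 a1 a2 a3 a4 b1 b2 b3 b4 = 0.
Proof.
  unfold padd, csq, pdot, dot4; simpl; intros hsum hnorm.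
  injection hsum as hre him.
  repeat split; lra.
Qed.

Lemma frame_orthonormal_cols (u1 u2 u3 u4 : pt) (c1 c2 c3 c4 d1 d2 d3 d4 : R) :
  let a1 := fst u1 in let a2 := fst u2 in let a3 := fst u3 in let a4 := fst u4 in
  let b1 := snd u1 in let b2 := snd u2 in let b3 := snd u3 in let b4 := snd u4 in
  dot4 a1 a2 a3 a4 a1 a2 a3 a4 = 1 -> dot4 b1 b2 b3 b4 b1 b2 b3 b4 = 1 ->
  dot4 a1 a2 a3 a4 b1 b2 b3 b4 = 0 ->
  dual_basis u1 u2 u3 u4 c1 c2 c3 c4 d1 d2 d3 d4 ->
  orthonormal_rows
    (transpose (frame (quad u1 u2 u3 u4) (quad (c1, d1) (c2, d2) (c3, d3) (c4, d4)))).
Proof.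
  unfold dual_basis, dot4; simpl; intros haa hbb hab (hcc & hdd & hcd & hca & hcb & hda & hdb).
  intros [|[|[|[|i]]]] [|[|[|[|j]]]] hi hj; try lia;
    unfold row_gram, transpose, frame, sum4, kron; simpl; lra.
Qed.

Theorem theorem5p1 (A B C D : pt) :
  nondegenerate A B C D ->
  nonconvex A B C D ->
  perimeter A B C D = 2 ->
  forall u1 u2 u3 u4 : pt,
    admissible_roots A B C D u1 u2 u3 u4 ->
    forall K L M N : pt,
      is_dual u1 u2 u3 u4 K L M N ->
      nonconvex K L M N.
Proof.
  intros _ hnc hper u1 u2 u3 u4 (e1 & e2 & e3 & e4 & _) K L M N hdual.
  destruct hdual as (c1 & c2 & c3 & c4 & d1 & d2 & d3 & d4 & hbasis & w1 & w2 & w3 & w4).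
  apply nonconvex_iff_turn_product_neg in hnc; apply nonconvex_iff_turn_product_neg.
  rewrite turn_product_edges in hnc |- *.
  rewrite w1, w2, w3, w4; rewrite <- e1, <- e2, <- e3, <- e4 in hnc.
  assert (hu : padd (padd (padd (csq u1) (csq u2)) (csq u3)) (csq u4) = (0, 0))
    by (rewrite e1, e2, e3, e4; apply edges_sum_zero).
  unfold perimeter in hper; rewrite <- e1, <- e2, <- e3, <- e4, !cnorm_csq in hper.
  destruct (re_im_orthonormal _ _ _ _ hu hper) as (haa & hbb & hab).
  pose proof (frame_pdot_opp _ _
    (frame_orthonormal_cols _ _ _ _ _ _ _ _ _ _ _ _ haa hbb hab hbasis)) as hgram.
  pose proof (cyclic_cross_csq_opp_gram _ _ hgram) as hturns; simpl in hturns.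
  rewrite hturns; exact hnc.
Qed.
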